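(* Let $A^1,A^2$ be finite nonempty sets, let $\tau^1,\tau^2\ge 0$, and for $i\in\{1,2\}$ with $j\neq i$ let $R^i\in\mathbb{R}^{|A^i|\times|A^j|}$ be arbitrary. Let $\underline{r}$ and $\overline{r}$ denote, respectively, the minimum and maximum entries of the matrix $R^1+(R^2)^T$. Then $$\underline{r}\le \mathrm{val}^1(R^1)+\mathrm{val}^2(R^2)\le \overline{r},\qquad \underline{r}\le \underline{\mathrm{val}}^1(R^1)+\underline{\mathrm{val}}^2(R^2)\le \overline{r},$$ and, for each $i\in\{1,2\}$ and $j\ne i$, $$-\tau^j\log|A^j|\le \underline{\mathrm{val}}^i(R^i)-\mathrm{val}^i(R^i)\le \tau^i\log|A^i|.$$
   Context: $\Delta^i$ denotes the probability simplex over $A^i$. The entropy is $H^i(\mu^i)=-\sum_{a^i\in A^i}\mu^i(a^i)\log\mu^i(a^i)\in[0,\log|A^i|]$. For $i\in\{1,2\}$, $j\neq i$: $\mathrm{val}^i(R^i)=\max_{\mu^i\in\Delta^i}\min_{\mu^j\in\Delta^j}(\mu^i)^TR^i\mu^j$ and $\underline{\mathrm{val}}^i(R^i)=\max_{\mu^i\in\Delta^i}\min_{\mu^j\in\Delta^j}\{(\mu^i)^TR^i\mu^j+\tau^iH^i(\mu^i)-\tau^jH^j(\mu^j)\}$. *)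

From HB Require Import structures.
From mathcomp Require Import all_boot all_order all_algebra.
From mathcomp Require Import all_classical all_reals all_analysis.
Set Implicit Arguments. Unset Strict Implicit. Unset Printing Implicit Defensive.
Import Order.TTheory GRing.Theory Num.Theory.
Local Open Scope ring_scope.
Local Open Scope classical_set_scope.

Section Defs.
Variable R : realType.

Definition simplex (A : finType) (mu : A -> R) : Prop :=
  (forall a, 0 <= mu a) /\ \sum_(a : A) mu a = 1.

(* Shannon entropy (natural log), with 0 log 0 = 0 *)
Definition entropy (A : finType) (mu : A -> R) : R :=
  - \sum_(a : A) mu a * ln (mu a).

Definition bil (A B : finType) (mu : A -> R) (M : A -> B -> R) (nu : B -> R) : R :=
  \sum_(a : A) \sum_(b : B) mu a * M a b * nu b.

(* gval(M) = max_{mu} min_{nu} mu^T M nu   (max/min written as sup/inf; they are attained) *)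
Definition gval (A B : finType) (M : A -> B -> R) : R :=
  sup [set x | exists mu : A -> R, simplex mu /\
     x = inf [set y | exists nu : B -> R, simplex nu /\ y = bil mu M nu]].

Definition rgval (A B : finType) (taui tauj : R) (M : A -> B -> R) : R :=
  sup [set x | exists mu : A -> R, simplex mu /\
     x = inf [set y | exists nu : B -> R, simplex nu /\
              y = bil mu M nu + taui * entropy mu - tauj * entropy nu]].

End Defs.

From HB Require Import structures.
From mathcomp Require Import all_boot all_order all_algebra.
From mathcomp Require Import all_classical all_reals all_analysis.
From mathcomp Require Import ring lra.
Import Order.TTheory GRing.Theory Num.Theory.
Set Implicit Arguments. Unset Strict Implicit. Unset Printing Implicit Defensive.
Local Open Scope ring_scope.
Local Open Scope classical_set_scope.

(* The entropy terms of the two regularized games cancel, so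
   payoff^1(x, y) + payoff^2(y, x) = x^T (R^1 + (R^2)^T) y lies in [r_lo, r_hi] for all
   mixed strategies x, y.  For the upper bound it suffices to play any x against any y.
   The lower bound needs the minimax inequality min_y max_x <= max_x min_y for the
   concave-convex payoff of game 1: player 1 runs Hedge (multiplicative weights) over a
   fine grid of his simplex against approximate best responses of player 2, and the
   average of these responses is an almost optimal y.  Finally, the regularization shifts
   each payoff by t^i H(x) - t^j H(y) with 0 <= H <= ln |A|, which bounds the gap between
   the regularized and the plain value (the case t = 0). *)

Section RealFacts.
Variable R : realType.
Implicit Types x y u v d m : R.

Lemma ln_le_subr1 x : 0 < x -> ln x <= x - 1.
Proof. by move=> x0; rewrite -{1}(subrK 1 x) addrC le_ln1Dx //; lra. Qed.

Lemma subr1V_le_ln x : 0 < x -> 1 - x^-1 <= ln x.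
Proof.
by move=> x0; have := @ln_le_subr1 x^-1; rewrite invr_gt0 lnV ?posrE // => /(_ x0); lra.
Qed.

Lemma xlnx_superadditive u v : 0 <= v -> v <= u ->
  v * ln v + (u - v) * ln (u - v) <= u * ln u.
Proof.
move=> v0 vu.
have -> : u * ln u = v * ln u + (u - v) * ln u by rewrite -mulrDl addrC subrK.
have mono w : 0 <= w -> w <= u -> w * ln w <= w * ln u.
  move=> w0 wu; have [->|wp] := eqVneq w 0; first by rewrite !mul0r.
  have {}wp : 0 < w by rewrite lt_neqAle eq_sym wp.
  by rewrite ler_pM2l // ler_ln ?posrE //; exact: lt_le_trans wu.
by rewrite lerD ?mono // ?subr_ge0 // lerBlDr lerDl.
Qed.

Lemma xlnx_increment_le u v : 0 <= u -> u <= v -> v <= 1 ->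
  v * ln v - u * ln u <= v - u.
Proof.
move=> u0 uv v1; have lnv0 := ln_le0 v1.
have [u00|up] := eqVneq u 0.
  have v0 : 0 <= v by rewrite -u00.
  by rewrite u00 mul0r !subr0 (le_trans (mulr_ge0_le0 v0 lnv0)).
have {up}up : 0 < u by rewrite lt_neqAle eq_sym up.
have vp : 0 < v by exact: lt_le_trans uv.
have ratio : u * (ln v - ln u) <= v - u.
  have := ln_le_subr1 (divr_gt0 vp up).
  rewrite lnM ?posrE ?invr_gt0 // lnV ?posrE // -(ler_pM2l up) => /le_trans; apply.
  by rewrite mulrBr mulr1 mulrCA mulfV ?gt_eqF // mulr1.
have : (v - u) * ln v <= 0 by apply: mulr_ge0_le0; rewrite ?subr_ge0.
by move: ratio; rewrite mulrBr; lra.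
Qed.

(* Write [-d ln d = d (ln m + ln (1/(d m)))] and use [ln w <= w - 1] twice. *)
Lemma neg_xlnx_small d m : 0 < m -> 0 <= d -> d <= (m * m)^-1 -> - (d * ln d) <= 2 / m.
Proof.
move=> m0 d0 dm; have [->|dn0] := eqVneq d 0; first by rewrite mul0r oppr0 divr_ge0 // ltW.
have dp : 0 < d by rewrite lt_neqAle eq_sym dn0.
have mn0 : m != 0 by rewrite gt_eqF.
have split_ln : - (d * ln d) = d * (ln m + ln ((d * m)^-1)).
  rewrite -lnM ?posrE ?invr_gt0 ?mulr_gt0 // invfM mulrCA mulfV // mulr1 lnV ?posrE //.
  by rewrite mulrN.
have lnm := ln_le_subr1 m0.
have lndm := @ln_le_subr1 (d * m)^-1; rewrite invr_gt0 mulr_gt0 // in lndm.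
have dm_le : d * m <= m^-1.
  apply: (le_trans (ler_wpM2r (ltW m0) dm)).
  by rewrite invfM -mulrA mulVf // mulr1.
rewrite split_ln (le_trans (ler_wpM2l (ltW dp) (lerD lnm (lndm isT)))) //.
have -> : d * (m - 1 + ((d * m)^-1 - 1)) = d * m + m^-1 - 2 * d.
  by field; rewrite dn0 mn0.
lra.
Qed.

Lemma neg_xlnx_lipschitz u v m : 1 <= m -> 0 <= u <= 1 -> 0 <= v <= 1 ->
  `|u - v| <= (m * m)^-1 -> - (u * ln u) - - (v * ln v) <= 3 / m.
Proof.
move=> m1 /andP[u0 u1] /andP[v0 v1]; rewrite ler_norml => /andP[h1 h2].
have m0 : 0 < m by lra.
have mm : (m * m)^-1 <= m^-1.
  by rewrite lef_pV2 ?posrE ?mulr_gt0 // -{1}(mul1r m) ler_wpM2r // ltW.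
have m3 : 2 / m + m^-1 = 3 / m by field; rewrite gt_eqF.
have im0 : 0 <= m^-1 by rewrite invr_ge0 ltW.
have [vu|uv] := leP v u.
  have := xlnx_superadditive v0 vu.
  have := @neg_xlnx_small (u - v) m m0; rewrite subr_ge0 vu => /(_ isT h2).
  lra.
have := xlnx_increment_le u0 (ltW uv) v1; lra.
Qed.

Lemma expR_le_quadratic x : x <= 1 / 2 -> expR x <= 1 + x + 2 * (x * x).
Proof.
move=> x12; have p1 : 0 < 1 - x by lra.
have inv_bound : expR x * (1 - x) <= 1.
  have := ler_wpM2l (ltW (expR_gt0 x)) (expR_ge1Dx (- x)).
  by rewrite -expRD subrr expR0 mulrDr mulr1 mulrN.
rewrite -(ler_pM2r p1) (le_trans inv_bound) //.
have -> : (1 + x + 2 * (x * x)) * (1 - x) = 1 + (x * x) * (1 - 2 * x) by ring.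
by rewrite lerDl mulr_ge0 // ?subr_ge0 -?expr2 ?sqr_ge0 //; lra.
Qed.

End RealFacts.

Section Simplex.
Variable R : realType.
Implicit Types A I : finType.

Lemma simplex_le1 A (mu : A -> R) a : simplex mu -> mu a <= 1.
Proof.
move=> [mu0 <-]; rewrite (bigD1 a) //= lerDl.
by apply: sumr_ge0 => b _; exact: mu0.
Qed.

Lemma simplex_card_gt0 A (mu : A -> R) : simplex mu -> (0 < #|A|)%N.
Proof.
move=> [_ mu1]; case: (pickP (fun _ : A => true)) => [a _|A0].
  by apply/card_gt0P; exists a.
by move: mu1; rewrite big_pred0 // => /esym/eqP; rewrite oner_eq0.
Qed.

Lemma simplex_uniform A : (0 < #|A|)%N -> simplex (fun _ : A => (#|A|%:R : R)^-1).
Proof.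
move=> A0; split=> [a|]; first by rewrite invr_ge0 ler0n.
by rewrite sumr_const -/#|A| -[_ *+ #|A|]mulr_natr mulVf // pnatr_eq0 -lt0n.
Qed.

Lemma simplex_mix I A (p : I -> R) (X : I -> A -> R) :
  simplex p -> (forall i, simplex (X i)) -> simplex (fun a => \sum_i p i * X i a).
Proof.
move=> [p0 p1] hX; split=> [a|].
  by apply: sumr_ge0 => i _; rewrite mulr_ge0 // (hX i).1.
rewrite exchange_big /= -p1; apply: eq_bigr => i _.
by rewrite -mulr_sumr (hX i).2 mulr1.
Qed.

Lemma entropy_ge0 A (mu : A -> R) : simplex mu -> 0 <= entropy mu.
Proof.
move=> hmu; rewrite oppr_ge0; apply: sumr_le0 => a _.
by apply: mulr_ge0_le0; [exact: hmu.1 | exact/ln_le0/simplex_le1].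
Qed.

(* Termwise, [ln w >= 1 - 1/w] at [w = n mu(a)] gives [-mu ln mu - mu ln n <= 1/n - mu]. *)
Lemma entropy_le_ln_card A (mu : A -> R) : simplex mu -> entropy mu <= ln #|A|%:R.
Proof.
move=> hmu; have [mu0 mu1] := hmu; set n : R := #|A|%:R.
have n0 : 0 < n by rewrite ltr0n (simplex_card_gt0 hmu).
have term a : - (mu a * ln (mu a)) - mu a * ln n <= n^-1 - mu a.
  have [->|mua] := eqVneq (mu a) 0.
    by rewrite !mul0r !(oppr0, subr0, addr0) invr_ge0 ltW.
  have mup : 0 < mu a by rewrite lt_neqAle eq_sym mua mu0.
  have := subr1V_le_ln (mulr_gt0 n0 mup).
  rewrite lnM ?posrE // -(ler_pM2l mup) mulrBr mulr1 invfM mulrCA mulfV // mulr1.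
  lra.
have := ler_sum (index_enum A) (fun a (_ : true) => term a).
rewrite !sumrB -mulr_suml mu1 mul1r sumr_const -/#|A| -[_ *+ #|A|]mulr_natr.
rewrite mulVf ?gt_eqF //.
by rewrite /entropy sumrN; lra.
Qed.

(* Tangent-line bound [X ln X >= X ln s + (X - s)] at the mean [s], averaged. *)
Lemma xlnx_convex I (p : I -> R) (X : I -> R) : simplex p -> (forall i, 0 <= X i) ->
  (\sum_i p i * X i) * ln (\sum_i p i * X i) <= \sum_i p i * (X i * ln (X i)).
Proof.
move=> [p0 p1] X0; set s := \sum_i p i * X i.
have pX0 i : 0 <= p i * X i by rewrite mulr_ge0.
have [s0|sn0] := eqVneq s 0.
  have pX := psumr_eq0P (fun i _ => pX0 i) s0.
  rewrite s0 mul0r; apply: sumr_ge0 => i _.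
  by rewrite mulrA pX // mul0r.
have sp : 0 < s by rewrite lt_neqAle eq_sym sn0 sumr_ge0.
have tangent i : p i * X i * ln s + p i * (X i - s) <= p i * (X i * ln (X i)).
  rewrite -mulrA -mulrDr ler_wpM2l //.
  have [->|Xn0] := eqVneq (X i) 0; first by rewrite !mul0r add0r subr_le0 ltW.
  have Xp : 0 < X i by rewrite lt_neqAle eq_sym Xn0 X0.
  have := subr1V_le_ln (divr_gt0 Xp sp).
  rewrite lnM ?posrE ?invr_gt0 // lnV ?posrE // invf_div => /(ler_wpM2l (ltW Xp)).
  by rewrite mulrBr mulr1 mulrCA mulfV ?gt_eqF // mulr1 mulrDr mulrN; lra.
have := ler_sum (index_enum I) (fun i (_ : true) => tangent i).
rewrite big_split /= -mulr_suml -/s.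
have -> : \sum_i p i * (X i - s) = 0.
  by rewrite (eq_bigr (fun i => p i * X i - p i * s)) => [|i _]; rewrite ?mulrBr //
    sumrB -mulr_suml p1 mul1r subrr.
by rewrite addr0.
Qed.

Lemma entropy_concave I A (p : I -> R) (X : I -> A -> R) :
  simplex p -> (forall i, simplex (X i)) ->
  \sum_i p i * entropy (X i) <= entropy (fun a => \sum_i p i * X i a).
Proof.
move=> hp hX; rewrite /entropy.
have -> : \sum_i p i * - (\sum_a X i a * ln (X i a)) =
          - \sum_a \sum_i p i * (X i a * ln (X i a)).
  rewrite exchange_big /= -sumrN; apply: eq_bigr => i _.
  by rewrite mulrN mulr_sumr.
rewrite lerN2; apply: ler_sum => a _.
by apply: xlnx_convex => // i; exact: (hX i).1.
Qed.

Lemma entropy_lipschitz A (y y' : A -> R) m : 1 <= m -> simplex y -> simplex y' ->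
  (forall a, `|y a - y' a| <= (m * m)^-1) -> entropy y - entropy y' <= #|A|%:R * (3 / m).
Proof.
move=> m1 hy hy' hyy'; rewrite /entropy opprK addrC -sumrN -big_split /=.
have -> : #|A|%:R * (3 / m) = \sum_(a : A) 3 / m by rewrite sumr_const mulr_natl.
apply: ler_sum => a _.
rewrite addrC -[y' a * _]opprK; apply: neg_xlnx_lipschitz => //; apply/andP; split;
  by [exact: hy.1 | exact: simplex_le1 | exact: hy'.1].
Qed.

End Simplex.

Arguments simplex_uniform {R A}.

Section Bilinear.
Variables (R : realType) (A B : finType) (M : A -> B -> R).

Definition norm1 : R := \sum_a \sum_b `|M a b|.

Lemma norm1_ge0 : 0 <= norm1.
Proof. by apply: sumr_ge0 => a _; apply: sumr_ge0. Qed.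

Lemma bil_norm_le mu nu : simplex mu -> simplex nu -> `|bil mu M nu| <= norm1.
Proof.
move=> hmu hnu; apply: (le_trans (ler_norm_sum _ _ _)); apply: ler_sum => a _.
apply: (le_trans (ler_norm_sum _ _ _)); apply: ler_sum => b _.
rewrite !normrM (ger0_norm (hmu.1 a)) (ger0_norm (hnu.1 b)).
have mu0 := hmu.1 a; have nu0 := hnu.1 b.
rewrite -[leRHS]mulr1 ler_pM ?mulr_ge0 ?simplex_le1 //.
by rewrite ler_piMl ?simplex_le1.
Qed.

Lemma bil_lipschitz_l x x' y d : simplex y -> (forall a, `|x a - x' a| <= d) ->
  bil x M y - bil x' M y <= norm1 * d.
Proof.
move=> hy hxx'; rewrite /bil -sumrB mulr_suml; apply: ler_sum => a _.
rewrite -sumrB mulr_suml; apply: ler_sum => b _.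
rewrite -!mulrA -mulrBl (le_trans (ler_norm _)) // normrM mulrC.
have d0 : 0 <= d := le_trans (normr_ge0 _) (hxx' a).
rewrite ler_pM // normrM (ger0_norm (hy.1 b)) ler_piMr //.
exact: simplex_le1.
Qed.

Lemma bil_mix_l (I : finType) (p : I -> R) (X : I -> A -> R) y :
  bil (fun a => \sum_i p i * X i a) M y = \sum_i p i * bil (X i) M y.
Proof.
rewrite /bil (eq_bigr (fun a => \sum_i \sum_b p i * (X i a * M a b * y b))) => [|a _].
  by rewrite exchange_big; apply: eq_bigr => i _; rewrite mulr_sumr; apply: eq_bigr => a _;
    rewrite mulr_sumr.
rewrite exchange_big; apply: eq_bigr => b _; rewrite !mulr_suml.
by apply: eq_bigr => i _; rewrite !mulrA.
Qed.

Lemma bil_mix_r (J : finType) (q : J -> R) (Y : J -> B -> R) x :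
  bil x M (fun b => \sum_j q j * Y j b) = \sum_j q j * bil x M (Y j).
Proof.
rewrite /bil (eq_bigr (fun a => \sum_j \sum_b q j * (x a * M a b * Y j b))) => [|a _].
  by rewrite exchange_big; apply: eq_bigr => j _; rewrite mulr_sumr; apply: eq_bigr => a _;
    rewrite mulr_sumr.
rewrite exchange_big; apply: eq_bigr => b _; rewrite !mulr_sumr.
by apply: eq_bigr => j _; rewrite mulrCA.
Qed.

End Bilinear.

Section Payoff.
Variables (R : realType) (A B : finType) (M : A -> B -> R) (ti tj : R).
Hypotheses (hA : (0 < #|A|)%N) (hB : (0 < #|B|)%N) (ti0 : 0 <= ti) (tj0 : 0 <= tj).

Definition payoff (mu : A -> R) (nu : B -> R) : R :=
  bil mu M nu + ti * entropy mu - tj * entropy nu.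

Definition payoff_set (mu : A -> R) : set R :=
  [set y | exists nu, simplex nu /\ y = payoff mu nu].

Definition guarantee (mu : A -> R) : R := inf (payoff_set mu).

Lemma rgvalE : rgval ti tj M = sup [set x | exists mu, simplex mu /\ x = guarantee mu].
Proof. by []. Qed.

Lemma payoff_bounds mu nu : simplex mu -> simplex nu ->
  - norm1 M - tj * ln #|B|%:R <= payoff mu nu <= norm1 M + ti * ln #|A|%:R.
Proof.
move=> hmu hnu; have := bil_norm_le M hmu hnu; rewrite ler_norml => /andP[b1 b2].
have f1 := ler_wpM2l ti0 (entropy_le_ln_card hmu).
have f2 := ler_wpM2l tj0 (entropy_le_ln_card hnu).
have f3 := mulr_ge0 ti0 (entropy_ge0 hmu).
have f4 := mulr_ge0 tj0 (entropy_ge0 hnu).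
by rewrite /payoff; apply/andP; split; lra.
Qed.

Lemma payoff_norm_le mu nu : simplex mu -> simplex nu ->
  `|payoff mu nu| <= norm1 M + ti * ln #|A|%:R + tj * ln #|B|%:R.
Proof.
move=> hmu hnu; have /andP[lo hi] := payoff_bounds hmu hnu.
have := mulr_ge0 ti0 (ln_ge0 (_ : 1 <= #|A|%:R)); rewrite ler1n => /(_ hA) lnA.
have := mulr_ge0 tj0 (ln_ge0 (_ : 1 <= #|B|%:R)); rewrite ler1n => /(_ hB) lnB.
by rewrite ler_norml; apply/andP; split; lra.
Qed.

Lemma payoff_set_has_inf mu : simplex mu -> has_inf (payoff_set mu).
Proof.
move=> hmu; split.
  exists (payoff mu (fun=> #|B|%:R^-1)), (fun=> #|B|%:R^-1).
  by split=> //; exact: simplex_uniform.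
exists (- norm1 M - tj * ln #|B|%:R) => _ [nu [hnu ->]].
by case/andP: (payoff_bounds hmu hnu).
Qed.

Lemma guarantee_le_payoff mu nu : simplex mu -> simplex nu -> guarantee mu <= payoff mu nu.
Proof.
by move=> hmu hnu; apply: ge_inf; [exact: (payoff_set_has_inf hmu).2 | exists nu].
Qed.

Lemma guarantee_ge mu c : simplex mu ->
  (forall nu, simplex nu -> c <= payoff mu nu) -> c <= guarantee mu.
Proof.
move=> hmu h; apply: lb_le_inf => [|_ [nu [hnu ->]]]; last exact: h.
exact: (payoff_set_has_inf hmu).1.
Qed.

Lemma guarantee_approx mu e : simplex mu -> 0 < e ->
  exists2 nu, simplex nu & payoff mu nu < guarantee mu + e.
Proof.
move=> hmu e0; have [_ [nu [hnu ->]] lt_e] := inf_adherent e0 (payoff_set_has_inf hmu).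
by exists nu.
Qed.

Lemma guarantee_le_rgval mu : simplex mu -> guarantee mu <= rgval ti tj M.
Proof.
move=> hmu; rewrite rgvalE; apply: ub_le_sup; last by exists mu.
exists (norm1 M + ti * ln #|A|%:R) => _ [mu' [hmu' ->]].
have hu := @simplex_uniform R B hB.
by apply: le_trans (guarantee_le_payoff hmu' hu) _; case/andP: (payoff_bounds hmu' hu).
Qed.

Lemma rgval_le c : (forall mu, simplex mu -> guarantee mu <= c) -> rgval ti tj M <= c.
Proof.
move=> h; rewrite rgvalE; apply: ge_sup => [|_ [mu [hmu ->]]]; last exact: h.
exists (guarantee (fun=> #|A|%:R^-1)), (fun=> #|A|%:R^-1).
by split=> //; exact: simplex_uniform.
Qed.

Lemma payoff_concave_l (I : finType) (p : I -> R) (X : I -> A -> R) y :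
  simplex p -> (forall i, simplex (X i)) ->
  \sum_i p i * payoff (X i) y <= payoff (fun a => \sum_i p i * X i a) y.
Proof.
move=> hp hX; rewrite /payoff bil_mix_l.
have -> : \sum_i p i * (bil (X i) M y + ti * entropy (X i) - tj * entropy y) =
   \sum_i p i * bil (X i) M y + ti * (\sum_i p i * entropy (X i)) - tj * entropy y.
  rewrite (eq_bigr (fun i => p i * bil (X i) M y + ti * (p i * entropy (X i))
    - tj * entropy y * p i)) => [|i _]; last by ring.
  by rewrite sumrB big_split /= -!mulr_sumr hp.2 mulr1.
by rewrite lerD2r lerD2l ler_wpM2l // entropy_concave.
Qed.

Lemma payoff_convex_r (J : finType) (q : J -> R) (Y : J -> B -> R) x :
  simplex q -> (forall j, simplex (Y j)) ->
  payoff x (fun b => \sum_j q j * Y j b) <= \sum_j q j * payoff x (Y j).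
Proof.
move=> hq hY; rewrite /payoff bil_mix_r.
have -> : \sum_j q j * (bil x M (Y j) + ti * entropy x - tj * entropy (Y j)) =
   \sum_j q j * bil x M (Y j) + ti * entropy x - tj * (\sum_j q j * entropy (Y j)).
  rewrite (eq_bigr (fun j => q j * bil x M (Y j) + ti * entropy x * q j
    - tj * (q j * entropy (Y j)))) => [|j _]; last by ring.
  by rewrite sumrB big_split /= -!mulr_sumr hq.2 mulr1.
by rewrite lerD2l lerN2 ler_wpM2l // entropy_concave.
Qed.

Lemma payoff_lipschitz_l x x' y m : 1 <= m -> simplex x -> simplex x' -> simplex y ->
  (forall a, `|x a - x' a| <= (m * m)^-1) ->
  payoff x y <= payoff x' y + (norm1 M + 3 * ti * #|A|%:R) / m.
Proof.
move=> m1 hx hx' hy hxx'; have m0 : 0 < m by lra.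
have hb := bil_lipschitz_l M hy hxx'.
have hmm : norm1 M * (m * m)^-1 <= norm1 M / m.
  rewrite ler_wpM2l ?norm1_ge0 // lef_pV2 ?posrE ?mulr_gt0 //.
  by rewrite -{1}(mul1r m) ler_wpM2r // ltW.
have he := ler_wpM2l ti0 (entropy_lipschitz m1 hx hx' hxx').
have -> : (norm1 M + 3 * ti * #|A|%:R) / m = norm1 M / m + ti * (#|A|%:R * (3 / m)) by ring.
by rewrite /payoff; lra.
Qed.

End Payoff.

Lemma rgval_le_shift (R : realType) (A B : finType) (M : A -> B -> R)
  (ti tj ti' tj' c : R) :
  (0 < #|A|)%N -> (0 < #|B|)%N -> 0 <= ti -> 0 <= tj -> 0 <= ti' -> 0 <= tj' ->
  (forall mu nu, simplex mu -> simplex nu ->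
    payoff M ti tj mu nu <= payoff M ti' tj' mu nu + c) ->
  rgval ti tj M <= rgval ti' tj' M + c.
Proof.
move=> hA hB ti0 tj0 ti'0 tj'0 hc; apply: rgval_le => // mu hmu.
rewrite -lerBlDr; apply: le_trans (guarantee_le_rgval M hB ti'0 tj'0 hmu).
apply: guarantee_ge => // nu hnu; rewrite lerBlDr.
exact: le_trans (guarantee_le_payoff M hB ti0 tj0 hmu hnu) (hc _ _ hmu hnu).
Qed.

Section Hedge.
Variables (R : realType) (I : finType) (J : Type) (N : I -> J -> R) (K V : R).
Hypotheses (hI : (0 < #|I|)%N) (K_gt0 : 0 < K) (hK : forall i j, `|N i j| <= K)
  (hV : forall p, simplex p -> exists j, \sum_i p i * N i j <= V).

Lemma exp_weights_step (w : I -> R) eta j :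
  (forall i, 0 <= w i) -> 0 < eta -> eta * K <= 1 / 2 ->
  \sum_i w i * N i j <= V * \sum_i w i ->
  \sum_i w i * expR (eta * N i j) <=
    (\sum_i w i) * expR (eta * V + 2 * (eta * eta) * (K * K)).
Proof.
move=> w0 eta0 etaK hwV; set c := 2 * (eta * eta) * (K * K).
have quad i : expR (eta * N i j) <= 1 + eta * N i j + c.
  have : `|eta * N i j| <= eta * K by rewrite normrM gtr0_norm // ler_pM2l.
  rewrite ler_norml => /andP[lo hi].
  apply: le_trans (expR_le_quadratic _) _; first lra.
  have : (eta * N i j) * (eta * N i j) <= (eta * K) * (eta * K) by nra.
  by rewrite /c; lra.
apply: le_trans (_ : _ <= \sum_i w i * (1 + eta * N i j + c)) _.
  by apply: ler_sum => i _; apply: ler_wpM2l; [exact: w0 | exact: quad].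
have -> : \sum_i w i * (1 + eta * N i j + c) =
    (\sum_i w i) * (1 + c) + eta * \sum_i w i * N i j.
  rewrite mulr_suml mulr_sumr -big_split; apply: eq_bigr => i _ /=; ring.
apply: le_trans (_ : (\sum_i w i) * (1 + (eta * V + c)) <= _); last first.
  by rewrite ler_wpM2l ?sumr_ge0 ?expR_ge1Dx.
by have := ler_wpM2l (ltW eta0) hwV; lra.
Qed.

Lemma hedge_potential eta T : 0 < eta -> eta * K <= 1 / 2 ->
  exists s : seq J, size s = T /\
    \sum_i expR (eta * \sum_(j <- s) N i j) <=
      #|I|%:R * expR (T%:R * (eta * V + 2 * (eta * eta) * (K * K))).
Proof.
move=> eta0 etaK; set a := eta * V + _; elim: T => [|T [s [sT pot]]].
  exists [::]; split=> //; rewrite mul0r expR0 mulr1.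
  by under eq_bigr do rewrite big_nil mulr0 expR0; rewrite sumr_const.
set w := fun i => expR (eta * \sum_(j <- s) N i j).
have w0 i : 0 < w i by exact: expR_gt0.
have W0 : 0 < \sum_i w i.
  have [i _] : exists i : I, true by move/card_gt0P: hI => [i _]; exists i.
  by rewrite (bigD1 i) //= ltr_pwDl // sumr_ge0 // => k _; exact: ltW.
have hp : simplex (fun i => w i / \sum_k w k).
  by split=> [i|]; rewrite ?divr_ge0 ?ltW // -mulr_suml mulfV ?gt_eqF.
have [j hj] := hV hp.
exists (j :: s); split; first by rewrite /= sT.
under eq_bigr do rewrite big_cons mulrDr expRD mulrC.
apply: le_trans (@exp_weights_step w eta j (fun i => ltW (w0 i)) eta0 etaK _) _.
  by rewrite -ler_pdivrMr // mulr_suml; under eq_bigr do rewrite mulrAC.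
apply: le_trans (ler_wpM2r (ltW (expR_gt0 a)) pot) _.
by rewrite -mulrA -expRD -[T.+1]addn1 natrD mulrDl mul1r.
Qed.

(* Run Hedge with step [eta] for [T > 2 ln |I| / (eta e)] rounds; the [js t] are the
   best responses it meets. *)
Lemma hedge e : 0 < e -> exists T (js : 'I_T -> J),
  (0 < T)%N /\ forall i, T%:R^-1 * \sum_t N i (js t) <= V + e.
Proof.
move=> e0; set eta := Num.min (1 / (2 * K)) (e / (4 * (K * K))).
have eta0 : 0 < eta by rewrite lt_min !divr_gt0 ?mulr_gt0.
have etaK : eta * K <= 1 / 2.
  have : eta <= 1 / (2 * K) by rewrite ge_min lexx.
  by rewrite ler_pdivlMr ?mulr_gt0 //; lra.
have etaK2 : 2 * (eta * eta) * (K * K) <= eta * e / 2.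
  have : eta * (4 * (K * K)) <= e by rewrite -ler_pdivlMr ?mulr_gt0 // ge_min lexx orbT.
  by move/(ler_wpM2l (ltW eta0)); lra.
have n0 : 0 < #|I|%:R :> R by rewrite ltr0n.
have lnI : 0 <= ln #|I|%:R :> R by apply: ln_ge0; rewrite ler1n.
set T := Num.bound (2 * ln #|I|%:R / (eta * e)).
have TlnI : 2 * ln #|I|%:R < T%:R * (eta * e).
  rewrite -ltr_pdivrMr ?mulr_gt0 //; apply: archi_boundP.
  by rewrite divr_ge0 ?mulr_ge0 // ltW ?mulr_gt0.
have T0 : 0 < T%:R :> R.
  have : 0 < T%:R * (eta * e) by lra.
  by rewrite pmulr_lgt0 ?mulr_gt0.
have [[|j0 s] [sT pot]] := hedge_potential T eta0 etaK; first by rewrite -sT ltxx in T0.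
exists T, (fun t => nth j0 (j0 :: s) t); split=> [|i]; first by rewrite -(ltr0n R).
have -> : \sum_(t < T) N i (nth j0 (j0 :: s) t) = \sum_(j <- j0 :: s) N i j.
  by rewrite (big_nth j0) sT big_mkord.
set S := \sum_(j <- _) N i j; set a := eta * V + _ in pot.
have expS : expR (eta * S) <= #|I|%:R * expR (T%:R * a).
  apply: le_trans pot; rewrite (bigD1 i) //= lerDl.
  by apply: sumr_ge0 => k _; exact: ltW (expR_gt0 _).
move: expS; rewrite -ler_ln ?posrE ?mulr_gt0 ?expR_gt0 // expRK.
rewrite lnM ?posrE ?expR_gt0 // expRK.
rewrite /a => lnS; have hT := ler_wpM2l (ltW T0) etaK2.
rewrite mulrC ler_pdivrMr // -(ler_pM2l eta0).
have -> : eta * ((V + e) * T%:R) = T%:R * (eta * V) + T%:R * (eta * e) by ring.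
rewrite mulrDr in lnS; lra.
Qed.

End Hedge.

Section Grid.
Variables (R : realType) (A : finType) (N : nat).
Hypotheses (hA : (0 < #|A|)%N) (hN : (0 < N)%N).

Definition grid := {ffun A -> 'I_N.+1}.

(* Index vectors that do not sum to [N] are sent to the uniform distribution,
   so that every index names a point of the simplex. *)
Definition grid_point (k : grid) : A -> R :=
  if (\sum_a k a == N)%N then fun a => (k a)%:R / N%:R else fun=> #|A|%:R^-1.

Lemma grid_point_simplex k : simplex (grid_point k).
Proof.
rewrite /grid_point; case: eqP => [kN|_]; last exact: simplex_uniform.
split=> [a|]; first by rewrite divr_ge0.
by rewrite -mulr_suml -natr_sum kN mulfV // pnatr_eq0 -lt0n.
Qed.

Lemma truncn_div_gap (r : R) : 0 <= r ->
  0 <= r - (Num.truncn (N%:R * r))%:R / N%:R <= N%:R^-1.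
Proof.
move=> r0; have N0 : 0 < N%:R :> R by rewrite ltr0n.
have /andP[lo hi] := truncn_itv (mulr_ge0 (ler0n R N) r0).
set t := Num.truncn _ in lo hi *.
have -> : r - t%:R / N%:R = (N%:R * r - t%:R) / N%:R by field; rewrite gt_eqF.
apply/andP; split; first by rewrite divr_ge0 ?subr_ge0 // ltW.
rewrite -[leRHS]mul1r; apply: ler_wpM2r; first by rewrite invr_ge0 ltW.
by rewrite -addn1 natrD in hi; lra.
Qed.

(* Truncate [N y(a)] at every [a] but one, and give the remaining mass to [a0]. *)
Lemma grid_round (y : A -> R) : simplex y ->
  exists k, forall a, `|y a - grid_point k a| <= #|A|%:R / N%:R.
Proof.
move=> hy; have [y0 y1] := hy; have [a0 _] : exists a0 : A, true.
  by move/card_gt0P: hA => [a _]; exists a.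
have N0 : 0 < N%:R :> R by rewrite ltr0n.
set t := fun a => Num.truncn (N%:R * y a).
have gap a : 0 <= y a - (t a)%:R / N%:R <= N%:R^-1 by exact: truncn_div_gap.
set S := (\sum_(a | a != a0) t a)%N.
have SN : (S <= N)%N.
  rewrite -(ler_nat R) natr_sum; apply: (@le_trans _ _ (\sum_a N%:R * y a)).
    rewrite [leRHS](bigD1 a0) //= ler_wpDl ?mulr_ge0 //; apply: ler_sum => a _.
    by have /andP[] := truncn_itv (mulr_ge0 (ler0n R N) (y0 a)).
  by rewrite -mulr_sumr y1 mulr1.
set f := fun a => if a == a0 then (N - S)%N else t a.
have f_lt a : (f a < N.+1)%N.
  rewrite /f; case: eqP => _; first by rewrite ltnS leq_subr.
  rewrite ltnS -(ler_nat R); have /andP[lo _] := truncn_itv (mulr_ge0 (ler0n R N) (y0 a)).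
  by apply: le_trans lo _; rewrite ler_piMr // simplex_le1.
set k : grid := [ffun a => inord (f a)].
have kf a : k a = f a :> nat by rewrite ffunE inordK.
have kN : (\sum_a k a)%N = N.
  rewrite (eq_bigr _ (fun a _ => kf a)) (bigD1 a0) //= /f eqxx.
  by rewrite (eq_bigr t) => [|a /negbTE ->]; rewrite ?subnK.
exists k => a; rewrite /grid_point kN eqxx kf /f.
have NA : N%:R^-1 <= #|A|%:R / N%:R :> R by rewrite ler_pMl ?invr_gt0 // ler1n.
case: eqP => [->|_]; last first.
  have /andP[lo hi] := gap a.
  by rewrite ger0_norm // (le_trans hi).
have -> : y a0 - (N - S)%:R / N%:R = - \sum_(a | a != a0) (y a - (t a)%:R / N%:R).
  rewrite natrB // natr_sum sumrB -mulr_suml mulrBl mulfV ?gt_eqF //.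
  by rewrite -y1 (bigD1 a0) //=; ring.
rewrite normrN ger0_norm; last by apply: sumr_ge0 => b _; case/andP: (gap b).
apply: (@le_trans _ _ (\sum_(a : A) N%:R^-1)).
  apply: (@le_trans _ _ (\sum_(a | a != a0) N%:R^-1)).
    by apply: ler_sum => b _; case/andP: (gap b).
  by rewrite [leRHS](bigD1 a0) //= lerDr invr_ge0.
by rewrite sumr_const -/#|A| mulr_natl.
Qed.

End Grid.

Section Minimax.
Variables (R : realType) (A B : finType) (M : A -> B -> R) (ti tj : R).
Hypotheses (hA : (0 < #|A|)%N) (hB : (0 < #|B|)%N) (ti0 : 0 <= ti) (tj0 : 0 <= tj).

Let C := norm1 M + 3 * ti * #|A|%:R.

Lemma payoff_round_l (m : nat) x : (0 < m)%N -> simplex x ->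
  exists k : grid A (#|A| * (m * m)), forall y, simplex y ->
    payoff M ti tj x y <= payoff M ti tj (grid_point R k) y + C / m%:R.
Proof.
move=> m0 hx; have hN : (0 < #|A| * (m * m))%N by rewrite !muln_gt0 hA m0.
have [k hk] := grid_round hA hN hx; exists k => y hy.
apply: payoff_lipschitz_l => //; first by rewrite ler1n.
  exact: grid_point_simplex.
move=> a; apply: le_trans (hk a) _.
by rewrite !natrM invfM mulrA mulfV ?invfM ?mul1r // pnatr_eq0 -lt0n.
Qed.

Lemma grid_mix_response (N : nat) (p : grid A N -> R) e :
  (0 < N)%N -> simplex p -> 0 < e ->
  exists2 y, simplex y &
    \sum_i p i * payoff M ti tj (grid_point R i) y <= rgval ti tj M + e.
Proof.
move=> hN hp e0; set xb := fun a => \sum_i p i * grid_point R i a.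
have hxb : simplex xb by apply: simplex_mix => // i; exact: grid_point_simplex.
have [y hy lt_y] := guarantee_approx M hB ti0 tj0 hxb e0; exists y => //.
have := payoff_concave_l M tj ti0 y hp (fun i => grid_point_simplex R hA hN i).
by have := guarantee_le_rgval M hB ti0 tj0 hxb; rewrite -/xb; lra.
Qed.

(* Player 1 runs Hedge over a grid of mesh [1/m^2] against the responses given by
   [grid_mix_response]; by convexity in [y] their average [ybar] is as good as each of
   them, and rounding to the grid costs at most [C / m] for an arbitrary [x]. *)
Lemma approx_minimax e : 0 < e -> exists2 ybar, simplex ybar &
  forall x, simplex x -> payoff M ti tj x ybar <= rgval ti tj M + e.
Proof.
move=> e0; set e3 := e / 3; have e30 : 0 < e3 by rewrite divr_gt0.
have C0 : 0 <= C by rewrite addr_ge0 ?norm1_ge0 // !mulr_ge0.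
set m := Num.bound (C / e3).
have Cm : C / e3 < m%:R by rewrite archi_boundP // divr_ge0 // ltW.
have m0 : 0 < m%:R :> R by apply: le_lt_trans Cm; rewrite divr_ge0 // ltW.
have Cme : C / m%:R <= e3.
  by rewrite ler_pdivrMr // mulrC -ler_pdivrMr // ltW.
set NA := (#|A| * (m * m))%N.
have mN : (0 < m)%N by rewrite -(ltr0n R).
have hNA : (0 < NA)%N by rewrite !muln_gt0 hA mN.
pose J := {y : B -> R | simplex y}.
pose Nx (i : grid A NA) (j : J) := payoff M ti tj (grid_point R i) (sval j).
set S := norm1 M + ti * ln #|A|%:R + tj * ln #|B|%:R.
have hI : (0 < #|grid A NA|)%N by apply/card_gt0P; exists [ffun=> ord0].
have K0 : 0 < `|S| + 1 by have := normr_ge0 S; lra.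
have hK i j : `|Nx i j| <= `|S| + 1.
  have := payoff_norm_le M hA hB ti0 tj0 (grid_point_simplex R hA hNA i) (svalP j).
  by have := ler_norm S; rewrite /Nx /S; lra.
have hV p : simplex p -> exists j, \sum_i p i * Nx i j <= rgval ti tj M + e3.
  by move=> hp; have [y hy hpy] := grid_mix_response hNA hp e30; exists (exist _ y hy).
have [T [js [T0 hjs]]] := hedge hI K0 hK hV e30.
have := @simplex_uniform R 'I_T; rewrite card_ord => /(_ T0) hq.
have hY t : simplex (sval (js t)) := svalP (js t).
exists (fun b => \sum_t T%:R^-1 * sval (js t) b); first exact: simplex_mix.
move=> x hx; have [k hk] := payoff_round_l mN hx.
apply: le_trans (hk _ (simplex_mix hq hY)) _.
have := payoff_convex_r M ti tj0 (grid_point R k) hq hY.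
rewrite -mulr_sumr; have := hjs k; rewrite /Nx.
have -> : e = e3 + e3 + e3 by rewrite /e3; field.
lra.
Qed.

End Minimax.

Section TwoPlayers.
Variables (R : realType) (A1 A2 : finType) (R1 : A1 -> A2 -> R) (R2 : A2 -> A1 -> R).

Lemma bil_add_swap x y :
  bil x R1 y + bil y R2 x = \sum_a \sum_b x a * y b * (R1 a b + R2 b a).
Proof.
rewrite /bil [X in _ + X]exchange_big -big_split; apply: eq_bigr => a _.
by rewrite -big_split; apply: eq_bigr => b _ /=; ring.
Qed.

Lemma sum_product_simplex (x : A1 -> R) (y : A2 -> R) : simplex x -> simplex y ->
  \sum_a \sum_b x a * y b = 1.
Proof.
by move=> hx hy; rewrite -hx.2; apply: eq_bigr => a _; rewrite -mulr_sumr hy.2 mulr1.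
Qed.

Lemma bil_add_swap_ge c x y : simplex x -> simplex y ->
  (forall a b, c <= R1 a b + R2 b a) -> c <= bil x R1 y + bil y R2 x.
Proof.
move=> hx hy hc; rewrite bil_add_swap -[c]mul1r -(sum_product_simplex hx hy) mulr_suml.
apply: ler_sum => a _; rewrite mulr_suml; apply: ler_sum => b _.
by rewrite ler_wpM2l ?hc ?mulr_ge0 ?(hx.1 a) ?(hy.1 b).
Qed.

Lemma bil_add_swap_le c x y : simplex x -> simplex y ->
  (forall a b, R1 a b + R2 b a <= c) -> bil x R1 y + bil y R2 x <= c.
Proof.
move=> hx hy hc; rewrite bil_add_swap -[c]mul1r -(sum_product_simplex hx hy) mulr_suml.
apply: ler_sum => a _; rewrite mulr_suml; apply: ler_sum => b _.
by rewrite ler_wpM2l ?hc ?mulr_ge0 ?(hx.1 a) ?(hy.1 b).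
Qed.

Variables (t1 t2 : R).
Hypotheses (hA1 : (0 < #|A1|)%N) (hA2 : (0 < #|A2|)%N) (ht1 : 0 <= t1) (ht2 : 0 <= t2).

Lemma payoff_add_swap x y :
  payoff R1 t1 t2 x y + payoff R2 t2 t1 y x = bil x R1 y + bil y R2 x.
Proof. by rewrite /payoff; ring. Qed.

Lemma rgval_add_le c : (forall a b, R1 a b + R2 b a <= c) ->
  rgval t1 t2 R1 + rgval t2 t1 R2 <= c.
Proof.
move=> hc; suff : rgval t2 t1 R2 <= c - rgval t1 t2 R1 by lra.
apply: rgval_le => // y hy; suff : rgval t1 t2 R1 <= c - guarantee R2 t2 t1 y by lra.
apply: rgval_le => // x hx; have := bil_add_swap_le hx hy hc.
have := guarantee_le_payoff R1 hA2 ht1 ht2 hx hy.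
have := guarantee_le_payoff R2 hA1 ht2 ht1 hy hx.
by rewrite -payoff_add_swap; lra.
Qed.

Lemma rgval_add_ge c : (forall a b, c <= R1 a b + R2 b a) ->
  c <= rgval t1 t2 R1 + rgval t2 t1 R2.
Proof.
move=> hc; apply/ler_addgt0Pr => e e0.
have [y hy hxy] := approx_minimax R1 hA1 hA2 ht1 ht2 e0.
suff : c - rgval t1 t2 R1 - e <= guarantee R2 t2 t1 y.
  by have := guarantee_le_rgval R2 hA1 ht2 ht1 hy; lra.
apply: guarantee_ge => // x hx; have := bil_add_swap_ge hx hy hc.
by have := hxy x hx; rewrite -payoff_add_swap; lra.
Qed.

End TwoPlayers.

Lemma gval_rgval0 (R : realType) (A B : finType) (M : A -> B -> R) : gval M = rgval 0 0 M.
Proof.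
congr sup; apply/seteqP; split=> _ [mu [hmu ->]]; exists mu; split=> //;
  congr inf; apply/seteqP; split=> _ [nu [hnu ->]]; exists nu; split=> //;
  by rewrite !mul0r addr0 subr0.
Qed.

Lemma rgval_sub_gval (R : realType) (A B : finType) (M : A -> B -> R) (ti tj : R) :
  (0 < #|A|)%N -> (0 < #|B|)%N -> 0 <= ti -> 0 <= tj ->
  - (tj * ln #|B|%:R) <= rgval ti tj M - gval M <= ti * ln #|A|%:R.
Proof.
move=> hA hB ti0 tj0.
have lo : rgval 0 0 M <= rgval ti tj M + tj * ln #|B|%:R.
  apply: rgval_le_shift => // mu nu hmu hnu; rewrite /payoff.
  have := ler_wpM2l tj0 (entropy_le_ln_card hnu).
  by have := mulr_ge0 ti0 (entropy_ge0 hmu); lra.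
have hi : rgval ti tj M <= rgval 0 0 M + ti * ln #|A|%:R.
  apply: rgval_le_shift => // mu nu hmu hnu; rewrite /payoff.
  have := ler_wpM2l ti0 (entropy_le_ln_card hmu).
  by have := mulr_ge0 tj0 (entropy_ge0 hnu); lra.
by rewrite gval_rgval0; apply/andP; split; lra.
Qed.

Theorem lemma1 (R : realType) (A1 A2 : finType)
  (hA1 : (0 < #|A1|)%N) (hA2 : (0 < #|A2|)%N)
  (tau1 tau2 : R) (ht1 : 0 <= tau1) (ht2 : 0 <= tau2)
  (R1 : A1 -> A2 -> R) (R2 : A2 -> A1 -> R)
  (rlo rhi : R)
  (hlo : (forall a1 a2, rlo <= R1 a1 a2 + R2 a2 a1) /\
         (exists a1 a2, R1 a1 a2 + R2 a2 a1 = rlo))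
  (hhi : (forall a1 a2, R1 a1 a2 + R2 a2 a1 <= rhi) /\
         (exists a1 a2, R1 a1 a2 + R2 a2 a1 = rhi)) :
  (rlo <= gval R1 + gval R2 <= rhi) /\
  (rlo <= rgval tau1 tau2 R1 + rgval tau2 tau1 R2 <= rhi) /\
  (- (tau2 * ln (#|A2|%:R)) <= rgval tau1 tau2 R1 - gval R1 <= tau1 * ln (#|A1|%:R)) /\
  (- (tau1 * ln (#|A1|%:R)) <= rgval tau2 tau1 R2 - gval R2 <= tau2 * ln (#|A2|%:R)).
Proof.
have [lo _] := hlo; have [hi _] := hhi.
split; first by rewrite !gval_rgval0 rgval_add_ge ?rgval_add_le.
split; first by rewrite rgval_add_ge ?rgval_add_le.
by split; apply: rgval_sub_gval.
Qed.
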